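(* Let $N\ge3$. Take $X_j=\sigma_x$ for $j=1,\dots,N-1$, $X_j'=\sigma_x$ for $j=1,\dots,N-2$, $X_{N-1}'=\sigma_y$, and $X_N=(\sigma_x-\sigma_y)/\sqrt2$, $X_N'=(\sigma_x+\sigma_y)/\sqrt2$; let $I^N_{CHSH}=\sum_{a,b\in\{0,1\}}(-1)^{ab}\mathbb A_a\otimes\mathbb B_b$. Then $2\sqrt2$ is the largest eigenvalue of $I^N_{CHSH}$, $|G\rangle$ is an eigenvector for it, and its eigenspace has dimension exactly $2^{N-2}$, spanned by the states $\bigotimes_{k\in K}\sigma_x^{(k)}|G\rangle$ with $K\subseteq\{1,\dots,N-2\}$.
   Context: $|G\rangle=\frac{1}{\sqrt2}(|0\cdots0\rangle+|1\cdots1\rangle)$ is the $N$-qubit GHZ state; $\sigma_x,\sigma_y,\sigma_z$ are Pauli matrices and $\sigma_x^{(k)}$ denotes $\sigma_x$ acting on the $k$-th qubit. $\mathbb A_0=\bigotimes_{j=1}^{N-1}X_j$, $\mathbb A_1=\bigotimes_{j=1}^{N-1}X_j'$ act on qubits $1,\dots,N-1$, and $\mathbb B_0=X_N$, $\mathbb B_1=X_N'$ act on qubit $N$. *)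

From mathcomp Require Import all_boot all_order all_algebra all_field.
Set Implicit Arguments. Unset Strict Implicit. Unset Printing Implicit Defensive.
Import Order.TTheory GRing.Theory Num.Theory.
Local Open Scope ring_scope.

(* Qubits are numbered 0..N-1 (paper: 1..N); qubit 0 is the most significant
   bit of a computational basis index i < 2^N. *)
Definition qbit (N : nat) (k : 'I_N) (i : nat) : 'I_2 :=
  inord ((i %/ 2 ^ (N.-1 - k)) %% 2).

(* Kronecker product P_0 (x) P_1 (x) ... (x) P_{N-1} of 2x2 matrices. *)
Definition tens_prod (N : nat) (P : 'I_N -> 'M[algC]_2) : 'M[algC]_(2 ^ N) :=
  \matrix_(i, j) \prod_(k < N) P k (qbit k i) (qbit k j).

Definition sigma_x : 'M[algC]_2 := \matrix_(i, j) (if i == j then 0 else 1).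
Definition sigma_y : 'M[algC]_2 :=
  \matrix_(i, j) (if i == j then 0 else if (i : nat) == 0%N then - 'i else 'i).

Definition X_N : 'M[algC]_2 := (sqrtC 2)^-1 *: (sigma_x - sigma_y).
Definition X_N' : 'M[algC]_2 := (sqrtC 2)^-1 *: (sigma_x + sigma_y).

(* Factor at qubit k of A_a (x) B_b. *)
Definition party_op (N : nat) (a b : bool) (k : 'I_N) : 'M[algC]_2 :=
  if (k : nat) == N.-1 then (if b then X_N' else X_N)
  else if a && ((k : nat) == (N - 2)%N) then sigma_y else sigma_x.

Definition I_CHSH (N : nat) : 'M[algC]_(2 ^ N) :=
  \sum_(a : bool) \sum_(b : bool) (-1) ^+ (a && b) *: tens_prod (@party_op N a b).

Definition ghz (N : nat) : 'cV[algC]_(2 ^ N) :=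
  \col_i (if ((i : nat) == 0%N) || ((i : nat) == (2 ^ N).-1) then (sqrtC 2)^-1 else 0).

Definition flip_x (N : nat) (K : {set 'I_N}) : 'M[algC]_(2 ^ N) :=
  tens_prod (fun k => if k \in K then sigma_x else 1%:M).

(* Eigenspace for column eigenvectors (A v = a v): its rows are the transposes
   of the column eigenvectors of A (mathcomp's eigenspace uses row vectors). *)
Definition col_eigenspace (n : nat) (A : 'M[algC]_n) (a : algC) := eigenspace A^T a.

(* Row space spanned by the (transposed) states bigotimes_{k in K} sigma_x^{(k)} |G>,
   K ranging over subsets of qubits 1..N-2 (0-indexed: 0..N-3). *)
Definition flip_span (N : nat) :=
  (\sum_(K : {set 'I_N} | K \subset [set k : 'I_N | (k < N - 2)%N])
      <<trmx (flip_x K *m ghz N)>>)%MS.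

From mathcomp Require Import all_boot all_order all_algebra all_field.
From mathcomp Require Import zify ring.
Set Implicit Arguments. Unset Strict Implicit.
Import Order.TTheory GRing.Theory Num.Theory.

(* In the computational basis [I_CHSH N] has at most one nonzero entry per
   row.  The four CHSH terms differ only on Alice's last qubit and Bob's
   qubit; there they add up to [2 sqrt 2] on the entries that complement
   every qubit of an index whose last two qubits agree, and cancel otherwise.
   So a row vector [v] is a [2 sqrt 2]-eigenvector iff [v j = v (rev_ord j)]
   when the last two qubits of [j] agree and [v j = 0] otherwise: it is
   determined by its [2 ^ (N - 2)] coordinates at the indices ending in [00].
   For such an index [j], [e_j + e_(rev_ord j)] is [sqrt 2] times the state
   [flip_x K |G>], [K] being the set of qubits equal to [1] in [j].  Using the
   eigenvalue equation at [j] and at [rev_ord j] shows that every eigenvalue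
   is [0] or [+-2 sqrt 2]. *)

Local Open Scope nat_scope.

Definition bit (m i : nat) : nat := (i %/ 2 ^ m) %% 2.

Lemma bit_le1 m i : bit m i <= 1.
Proof. by rewrite /bit -ltnS ltn_pmod. Qed.

Lemma bitn0 m : bit m 0 = 0.
Proof. by rewrite /bit div0n mod0n. Qed.

Lemma bit_mul4 m r : m <= 1 -> bit m (4 * r) = 0.
Proof. by rewrite /bit; case: m => [|[|//]] _; rewrite ?expn0 ?expn1 ?divn1; lia. Qed.

Lemma bit_inj N i j : i < 2 ^ N -> j < 2 ^ N ->
  (forall m, m < N -> bit m i = bit m j) -> i = j.
Proof.
move=> hi hj hb.
suff high_eq t : t <= N -> i %/ 2 ^ (N - t) = j %/ 2 ^ (N - t).
  by have := high_eq N (leqnn N); rewrite subnn expn0 !divn1.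
elim: t => [|t IH] ht; first by rewrite subn0 !divn_small.
have e : N - t = (N - t.+1).+1 by lia.
move: (IH (ltnW ht)); rewrite e expnSr !divnMA => h.
rewrite (divn_eq (i %/ 2 ^ (N - t.+1)) 2) (divn_eq (j %/ 2 ^ (N - t.+1)) 2) h.
by congr (_ + _); apply: hb; rewrite ltn_subrL (leq_trans _ ht).
Qed.

(* On ['I_(2 ^ N)], [rev_ord] is the bitwise complement. *)
Lemma bit_complement N i m : i < 2 ^ N -> m < N ->
  bit m (2 ^ N - i.+1) = 1 - bit m i.
Proof.
move=> hi hm; rewrite /bit.
set P := 2 ^ m; set E := 2 ^ (N - m).-1.
have hP : 0 < P by rewrite expn_gt0.
have hN : 2 ^ N = (2 * E) * P by rewrite /E /P -expnS -expnD; congr (2 ^ _); lia.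
have hq := divn_eq i P; set q := i %/ P in hq *; set r := i %% P in hq *.
have hr : r < P by rewrite ltn_pmod.
have hqE : q < 2 * E by rewrite /q ltn_divLR // -hN.
have -> : 2 ^ N - i.+1 = (2 * E - q - 1) * P + (P - 1 - r) by rewrite hN hq; nia.
by rewrite divnMDl // (divn_small (_ : P - 1 - r < P)) ?addn0; lia.
Qed.

Lemma qbitE N (k : 'I_N) i : qbit k i = bit (N.-1 - k) i :> nat.
Proof. by rewrite /qbit inordK // ltn_pmod. Qed.

Lemma qbit_inj N (i j : 'I_(2 ^ N)) :
  (forall k : 'I_N, qbit k i = qbit k j :> nat) -> i = j.
Proof.
move=> h; apply/val_inj/(bit_inj (ltn_ord i) (ltn_ord j)) => m hm.
have hk : N.-1 - m < N by lia.
have := h (Ordinal hk); rewrite !qbitE /=.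
by have -> : N.-1 - (N.-1 - m) = m by lia.
Qed.

Lemma qbit_rev N (k : 'I_N) (i : 'I_(2 ^ N)) :
  qbit k (rev_ord i) = 1 - qbit k i :> nat.
Proof. by rewrite !qbitE bit_complement //; have := ltn_ord k; lia. Qed.

Lemma neq_ord2 (x y : 'I_2) : (x != y) = (y == 1 - x :> nat).
Proof. by rewrite -val_eqE; case: x => [[|[|?]] ?]; case: y => [[|[|?]] ?]. Qed.

Lemma eq_qbit_rev N (k : 'I_N) (i j : 'I_(2 ^ N)) :
  (qbit k (rev_ord i) == qbit k (rev_ord j)) = (qbit k i == qbit k j).
Proof.
rewrite -!val_eqE /= !qbit_rev.
by case: (qbit k i) (qbit k j) => [[|[|?]] ?] [[|[|?]] ?].
Qed.

Lemma forall_qbit_neq N (i j : 'I_(2 ^ N)) :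
  [forall k : 'I_N, qbit k i != qbit k j] = (j == rev_ord i).
Proof.
apply/forallP/eqP => [h|->].
  by apply: qbit_inj => k; rewrite qbit_rev; apply/eqP; rewrite -neq_ord2.
by move=> k; rewrite neq_ord2 qbit_rev.
Qed.

Lemma eq_rev_ordC n (i j : 'I_n) : (i == rev_ord j) = (j == rev_ord i).
Proof. by apply/eqP/eqP => ->; rewrite rev_ordK. Qed.

Lemma eq_rev_ordL n (i j : 'I_n) : (rev_ord i == j) = (i == rev_ord j).
Proof. by apply/eqP/eqP => [<-|->]; rewrite rev_ordK. Qed.

Fact bob_qubit_subproof N : 1 < N -> N.-1 < N. Proof. lia. Qed.
Fact alice_qubit_subproof N : 1 < N -> N - 2 < N. Proof. lia. Qed.

(* The only qubits on which the factors of [I_CHSH N] are not all [sigma_x]. *)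
Definition bob_qubit N (h : 1 < N) : 'I_N := Ordinal (bob_qubit_subproof h).
Definition alice_qubit N (h : 1 < N) : 'I_N := Ordinal (alice_qubit_subproof h).

Lemma qbit_bob N h i : qbit (@bob_qubit N h) i = bit 0 i :> nat.
Proof. by rewrite qbitE /= subnn. Qed.

Lemma qbit_alice N h i : qbit (@alice_qubit N h) i = bit 1 i :> nat.
Proof. by rewrite qbitE /=; congr bit; lia. Qed.

Lemma alice_neq_bob N h : @alice_qubit N h != bob_qubit h.
Proof. by rewrite -val_eqE /=; lia. Qed.

(* Qubits [N - 2] and [N - 1] of the basis index [i] are its bits [1] and [0]. *)
Definition tail_agree (i : nat) : bool := bit 1 i == bit 0 i.

Lemma tail_agree_rev N (i : 'I_(2 ^ N)) :
  1 < N -> tail_agree (rev_ord i) = tail_agree i.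
Proof.
move=> hN; rewrite /tail_agree /= !bit_complement //; last lia.
by have := bit_le1 1 i; have := bit_le1 0 i; lia.
Qed.

Lemma tail_agree_qbit N (h : 1 < N) (i : 'I_(2 ^ N)) :
  tail_agree i = (qbit (alice_qubit h) i == qbit (bob_qubit h) i).
Proof. by rewrite -val_eqE /= qbit_alice qbit_bob. Qed.

Local Open Scope ring_scope.

Local Notation tsirelson := (2 * sqrtC 2 : algC).

Lemma sqrtC2_neq0 : sqrtC 2 != 0 :> algC.
Proof. by rewrite sqrtC_eq0 pnatr_eq0. Qed.

Lemma tsirelson_neq0 : tsirelson != 0.
Proof. by rewrite mulf_neq0 ?sqrtC2_neq0 // pnatr_eq0. Qed.

Lemma tsirelson_ge0 : 0 <= tsirelson.
Proof. by rewrite mulr_ge0 ?sqrtC_ge0 ?ler0n. Qed.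

Lemma sigma_xE (x y : 'I_2) : sigma_x x y = (x != y)%:R.
Proof. by rewrite mxE; case: (x == y). Qed.

Lemma prod_natb (I : finType) (b : I -> bool) :
  \prod_k (b k)%:R = [forall k, b k]%:R :> algC.
Proof.
case: (boolP [forall k, b k]) => [/forallP h|/forallPn [k hk]].
  by rewrite big1 // => k _; rewrite h.
by rewrite (bigD1 k) //= (negbTE hk) mul0r.
Qed.

Lemma chsh_local_sum (Q : algC) (xi xj yi yj : 'I_2) :
  \sum_(a : bool) \sum_(b : bool) (-1) ^+ (a && b) *
     ((if b then X_N' else X_N) yi yj * ((if a then sigma_y else sigma_x) xi xj * Q))
  = ((xi != xj) && (yi != yj) && (xi == yi))%:R * tsirelson * Q.
Proof.
have ii : 'i * 'i = -1 :> algC by rewrite -expr2 sqrCi.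
have -> : tsirelson = (sqrtC 2)^-1 * 4.
  apply: (mulfI sqrtC2_neq0); rewrite !mulrA mulfV ?sqrtC2_neq0 //.
  by rewrite mulrAC -expr2 sqrtCK; ring.
rewrite !big_bool /= /X_N /X_N'.
case: xi => [[|[|?]] ?] //; case: xj => [[|[|?]] ?] //;
case: yi => [[|[|?]] ?] //; case: yj => [[|[|?]] ?] //;
rewrite !mxE /= ?expr0 ?expr1; ring: ii.
Qed.

Section TwoSpecialQubits.

Variables (N : nat) (h : (1 < N)%N).
Local Notation B := (bob_qubit h).
Local Notation A := (alice_qubit h).

Lemma bigprod_bob_alice (F : 'I_N -> algC) :
  \prod_k F k = F B * (F A * \prod_(k | (k != B) && (k != A)) F k).
Proof. by rewrite (bigD1 B) //= (bigD1 A) ?alice_neq_bob. Qed.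

Lemma tens_prod_party_op a b (i j : 'I_(2 ^ N)) :
  tens_prod (party_op a b) i j =
    (if b then X_N' else X_N) (qbit B i) (qbit B j) *
    ((if a then sigma_y else sigma_x) (qbit A i) (qbit A j) *
     \prod_(k | (k != B) && (k != A)) (qbit k i != qbit k j)%:R).
Proof.
rewrite mxE bigprod_bob_alice /party_op /= eqxx.
have -> : (N - 2 == N.-1)%N = false by apply/eqP; lia.
rewrite eqxx andbT; congr (_ * (_ * _)); apply: eq_bigr => k /andP[kB kA].
by move: kB kA; rewrite -!val_eqE /= => /negbTE -> /negbTE ->; rewrite andbF sigma_xE.
Qed.

Lemma I_CHSH_entry (i j : 'I_(2 ^ N)) :
  I_CHSH N i j = ((j == rev_ord i) && tail_agree i)%:R * tsirelson.
Proof.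
rewrite /I_CHSH summxE; under eq_bigr => a _ do rewrite summxE.
under eq_bigr => a _ do under eq_bigr => b _ do rewrite mxE tens_prod_party_op.
rewrite chsh_local_sum -forall_qbit_neq (tail_agree_qbit h).
case: (qbit A i == qbit B i); rewrite ?andbF ?mul0r // !andbT -prod_natb bigprod_bob_alice.
by case: (qbit A i != qbit A j); case: (qbit B i != qbit B j);
  rewrite /= ?(mul0r, mulr0, mul1r, mulr1) // mulrC.
Qed.

End TwoSpecialQubits.

Section Eigenspace.

Variables (N : nat) (h : (1 < N)%N).

Lemma I_CHSH_sym : (I_CHSH N)^T = I_CHSH N.
Proof.
apply/matrixP => i j; rewrite mxE !(I_CHSH_entry h) eq_rev_ordC.
by case: (eqVneq j (rev_ord i)) => [->|] //=; rewrite tail_agree_rev.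
Qed.

Lemma mul_row_I_CHSH (v : 'rV[algC]_(2 ^ N)) :
  v *m I_CHSH N = \row_j ((tail_agree j)%:R * tsirelson * v 0 (rev_ord j)).
Proof.
apply/rowP => j; rewrite !mxE (bigD1 (rev_ord j)) //= big1 ?addr0.
  by rewrite (I_CHSH_entry h) rev_ordK eqxx tail_agree_rev //= mulrC.
by move=> i hi; rewrite (I_CHSH_entry h) eq_rev_ordC (negbTE hi) mul0r mulr0.
Qed.

Lemma eigenspace_I_CHSHP (v : 'rV[algC]_(2 ^ N)) :
  reflect (forall j, v 0 j = (tail_agree j)%:R * v 0 (rev_ord j))
          (v <= eigenspace (I_CHSH N) tsirelson)%MS.
Proof.
apply: (iffP eigenspaceP) => [e j | e]; last first.
  by apply/rowP => j; rewrite mul_row_I_CHSH !mxE [in RHS](e j); ring.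
have := congr1 (fun u : 'rV_(2 ^ N) => u 0 j) e; rewrite /= mul_row_I_CHSH !mxE => ej.
by apply: (mulfI tsirelson_neq0); rewrite -ej; ring.
Qed.

Lemma eigenvalue_I_CHSH_sqr a :
  eigenvalue (I_CHSH N) a -> a = 0 \/ a ^+ 2 = tsirelson ^+ 2.
Proof.
case/eigenvalueP => v e v_neq0.
have ej (j : 'I_(2 ^ N)) : (tail_agree j)%:R * tsirelson * v 0 (rev_ord j) = a * v 0 j.
  by have := congr1 (fun u : 'rV_(2 ^ N) => u 0 j) e; rewrite /= mul_row_I_CHSH !mxE.
have [j vj] : exists j, v 0 j != 0.
  apply/existsP; apply: contraNT v_neq0 => /existsPn vj0.
  by apply/eqP/rowP => j; rewrite mxE; apply/eqP; rewrite -[_ == 0]negbK vj0.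
case: (boolP (tail_agree j)) => hj.
  have e1 := ej j; have e2 := ej (rev_ord j).
  rewrite hj mul1r in e1; rewrite tail_agree_rev // hj rev_ordK mul1r in e2.
  right; apply: (mulIf vj).
  by rewrite [in RHS]expr2 -[RHS]mulrA e2 [RHS]mulrCA e1 mulrA -expr2.
left; have := ej j; rewrite (negbTE hj) !mul0r => /esym/eqP.
by rewrite mulf_eq0 (negbTE vj) orbF => /eqP.
Qed.

Lemma eigenvalue_le_tsirelson a : eigenvalue (I_CHSH N) a -> a <= tsirelson.
Proof.
case/eigenvalue_I_CHSH_sqr => [->|/eqP]; first exact: tsirelson_ge0.
rewrite eqf_sqr => /orP[/eqP -> // | /eqP ->].
by rewrite (le_trans _ tsirelson_ge0) // oppr_le0 tsirelson_ge0.
Qed.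

End Eigenspace.

Fact idx0_subproof N : (0 < 2 ^ N)%N. Proof. by rewrite expn_gt0. Qed.
Definition idx0 N : 'I_(2 ^ N) := Ordinal (idx0_subproof N).

Lemma qbit_idx0 N (k : 'I_N) : qbit k (idx0 N) = 0%N :> nat.
Proof. by rewrite qbitE bitn0. Qed.

Lemma tail_agree_idx0 N : tail_agree (idx0 N).
Proof. by rewrite /tail_agree /= !bitn0. Qed.

Lemma rev_idx0_neq N : (0 < N)%N -> rev_ord (idx0 N) != idx0 N.
Proof.
move=> hN; rewrite -val_eqE /= subn1 -lt0n -ltnS prednK ?expn_gt0 //.
by rewrite -{1}(expn0 2) ltn_exp2l.
Qed.

Lemma ghzE N (j : 'I_(2 ^ N)) :
  ghz N j 0 = ((j == idx0 N) || (j == rev_ord (idx0 N)))%:R * (sqrtC 2)^-1.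
Proof. by rewrite mxE -!val_eqE /= subn1; case: (_ || _); rewrite ?mul1r ?mul0r. Qed.

Lemma ghz_neq0 N : ghz N != 0.
Proof.
apply/eqP => /matrixP /(_ (idx0 N) 0); rewrite ghzE eqxx [RHS]mxE /= mul1r.
by apply/eqP; rewrite invr_eq0 sqrtC2_neq0.
Qed.

Lemma ghz_eigen N : (1 < N)%N -> ((ghz N)^T <= eigenspace (I_CHSH N) tsirelson)%MS.
Proof.
move=> hN; apply/eigenspace_I_CHSHP => // j; rewrite ![(ghz N)^T 0 _]mxE !ghzE.
rewrite (inj_eq rev_ord_inj) eq_rev_ordL orbC.
case: (boolP (tail_agree j)) => hj; first by rewrite mul1r.
rewrite mul0r; case: (eqVneq j (idx0 N)) => [e|_]; first by rewrite e tail_agree_idx0 in hj.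
case: (eqVneq j (rev_ord (idx0 N))) => [e|_]; last by rewrite mul0r.
by rewrite e tail_agree_rev // tail_agree_idx0 in hj.
Qed.

Lemma flip_xE N (K : {set 'I_N}) (j i : 'I_(2 ^ N)) :
  flip_x K j i = [forall k, (qbit k j == qbit k i) == (k \notin K)]%:R.
Proof.
rewrite mxE -prod_natb; apply: eq_bigr => k _.
by case: (k \in K); rewrite ?sigma_xE ?mxE //=; case: (qbit k j == qbit k i).
Qed.

Lemma flip_x_rev N (K : {set 'I_N}) (j i : 'I_(2 ^ N)) :
  flip_x K (rev_ord j) (rev_ord i) = flip_x K j i.
Proof. by rewrite !flip_xE; under eq_forallb => k do rewrite eq_qbit_rev. Qed.

Lemma flip_x_revr N (K : {set 'I_N}) (j i : 'I_(2 ^ N)) :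
  flip_x K j (rev_ord i) = flip_x K (rev_ord j) i.
Proof. by rewrite -flip_x_rev rev_ordK. Qed.

Definition flip_ghz N (K : {set 'I_N}) : 'rV[algC]_(2 ^ N) := (flip_x K *m ghz N)^T.

Lemma flip_ghzE N (K : {set 'I_N}) j : (0 < N)%N ->
  flip_ghz K 0 j = (flip_x K j (idx0 N) + flip_x K j (rev_ord (idx0 N))) * (sqrtC 2)^-1.
Proof.
move=> hN; rewrite [LHS]mxE [LHS]mxE (bigD1 (idx0 N)) //=.
rewrite (bigD1 (rev_ord (idx0 N))) ?rev_idx0_neq //=.
rewrite big1 => [|i /andP[i0 ir]]; last by rewrite ghzE (negbTE i0) (negbTE ir) mul0r mulr0.
by rewrite !ghzE !eqxx orbT /= !mul1r addr0 mulrDl.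
Qed.

Definition head_qubits N : {set 'I_N} := [set k : 'I_N | (k < N - 2)%N].

Lemma flip_x_idx0_tail N (h : (1 < N)%N) (K : {set 'I_N}) (j : 'I_(2 ^ N)) :
  K \subset head_qubits N -> ~~ tail_agree j -> flip_x K j (idx0 N) = 0.
Proof.
move=> hK; apply: contraNeq; rewrite flip_xE pnatr_eq0 eqb0 negbK => /forallP fix_tail.
have fixed (k : 'I_N) : (N - 2 <= k)%N -> qbit k j = 0%N :> nat.
  move=> hk; have /eqP := fix_tail k.
  rewrite (_ : k \notin K) => [/eqP ->|]; first exact: qbit_idx0.
  by apply: contraTN hk => /(subsetP hK); rewrite inE ltnNge.
by rewrite /tail_agree -(qbit_alice h j) -(qbit_bob h j) !fixed //=; lia.
Qed.

Lemma flip_ghz_eigen N (h : (1 < N)%N) (K : {set 'I_N}) :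
  K \subset head_qubits N -> (flip_ghz K <= eigenspace (I_CHSH N) tsirelson)%MS.
Proof.
move=> hK; apply/eigenspace_I_CHSHP => // j; rewrite !flip_ghzE ?(ltnW h) //.
rewrite !flip_x_revr rev_ordK.
case: (boolP (tail_agree j)) => hj; first by rewrite mul1r addrC.
rewrite (flip_x_idx0_tail h hK hj) (flip_x_idx0_tail h hK) ?tail_agree_rev //.
by rewrite addr0 !mul0r.
Qed.

Section PairBasis.

Variables (N : nat) (h : (1 < N)%N).

Lemma expn2_tail : (2 ^ N = 4 * 2 ^ (N - 2))%N.
Proof. by rewrite -{1}(subnKC h) expnD. Qed.

Fact tail00_subproof (r : 'I_(2 ^ (N - 2))) : (4 * r < 2 ^ N)%N.
Proof. by rewrite expn2_tail ltn_pmul2l. Qed.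

Definition tail00 (r : 'I_(2 ^ (N - 2))) : 'I_(2 ^ N) := Ordinal (tail00_subproof r).

Lemma tail_agree_tail00 r : tail_agree (tail00 r).
Proof. by rewrite /tail_agree /= !bit_mul4. Qed.

Lemma eq_tail00 r r' : (tail00 r == tail00 r') = (r == r').
Proof. by rewrite -!val_eqE /=; lia. Qed.

Lemma tail00_neq_rev r r' : (tail00 r == rev_ord (tail00 r')) = false.
Proof.
apply/negbTE/eqP => /(congr1 (fun i : 'I_(2 ^ N) => bit 0 i)) /=.
by rewrite bit_complement ?bit_mul4 //; [exact: tail00_subproof | lia].
Qed.

Lemma tail00_cover (j : 'I_(2 ^ N)) :
  tail_agree j -> exists r, j = tail00 r \/ j = rev_ord (tail00 r).
Proof.
suff tail00_cover0 (i : 'I_(2 ^ N)) : bit 0 i = 0%N -> tail_agree i -> exists r, i = tail00 r.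
  move=> hj; case: (bit 0 j =P 0%N) => [j0 | j1].
    by have [r ->] := tail00_cover0 j j0 hj; exists r; left.
  have rj0 : bit 0 (rev_ord j) = 0%N.
    by rewrite /= bit_complement //; have := bit_le1 0 j; lia.
  have [r er] := tail00_cover0 _ rj0 (etrans (tail_agree_rev j h) hj).
  by exists r; right; rewrite -er rev_ordK.
rewrite /tail_agree => i0 /eqP; rewrite i0 => i1.
have hr : (i %/ 4 < 2 ^ (N - 2))%N by rewrite ltn_divLR // mulnC -expn2_tail.
exists (Ordinal hr); apply: val_inj => /=.
by move: i0 i1; rewrite /bit expn0 expn1 divn1; lia.
Qed.

Definition pair_basis : 'M[algC]_(2 ^ (N - 2), 2 ^ N) :=
  \matrix_(r, j) ((j == tail00 r)%:R + (j == rev_ord (tail00 r))%:R).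

Lemma pair_basis_tail (r : 'I_(2 ^ (N - 2))) (j : 'I_(2 ^ N)) :
  ~~ tail_agree j -> pair_basis r j = 0.
Proof.
move=> hj; rewrite mxE; case: (eqVneq j (tail00 r)) => [e|_].
  by rewrite e tail_agree_tail00 in hj.
case: (eqVneq j (rev_ord (tail00 r))) => [e|_]; last by rewrite addr0.
by rewrite e tail_agree_rev // tail_agree_tail00 in hj.
Qed.

Lemma eigenvector_sub_pair_basis (v : 'rV[algC]_(2 ^ N)) :
  (v <= eigenspace (I_CHSH N) tsirelson)%MS -> (v <= pair_basis)%MS.
Proof.
move/(eigenspace_I_CHSHP h) => hv; apply/submxP; exists (\row_r v 0 (tail00 r)).
apply/rowP => j; rewrite !mxE.
case: (boolP (tail_agree j)) => hj; last first.
  by rewrite hv (negbTE hj) mul0r big1 // => r _; rewrite pair_basis_tail ?mulr0.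
have [r0 hr0] := tail00_cover hj.
rewrite (bigD1 r0) //= big1 ?addr0 => [|r hr]; rewrite !mxE; case: hr0 => ->.
- by rewrite eqxx tail00_neq_rev addr0 mulr1.
- rewrite eq_rev_ordL tail00_neq_rev eqxx add0r mulr1 hv rev_ordK.
  by rewrite tail_agree_rev // tail_agree_tail00 mul1r.
- by rewrite eq_tail00 tail00_neq_rev eq_sym (negbTE hr) addr0 mulr0.
- by rewrite !eq_rev_ordL rev_ordK tail00_neq_rev eq_tail00 eq_sym (negbTE hr) add0r mulr0.
Qed.

Lemma rank_pair_basis : \rank pair_basis = (2 ^ (N - 2))%N.
Proof.
apply/eqP; rewrite eqn_leq rank_leq_row /=.
pose select_tail00 : 'M[algC]_(2 ^ N, 2 ^ (N - 2)) := \matrix_(j, r) (j == tail00 r)%:R.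
have := mxrankM_maxl pair_basis select_tail00.
have -> : pair_basis *m select_tail00 = 1%:M.
  apply/matrixP => r r'; rewrite !mxE (bigD1 (tail00 r')) //= big1 ?addr0 => [|j hj].
    by rewrite !mxE eqxx mulr1 eq_tail00 tail00_neq_rev addr0 eq_sym.
  by rewrite [select_tail00 _ _]mxE (negbTE hj) mulr0.
by rewrite mxrank1.
Qed.

Definition flip_set (r : 'I_(2 ^ (N - 2))) : {set 'I_N} :=
  [set k : 'I_N | qbit k (tail00 r) != 0%N :> nat].

Lemma flip_set_sub r : flip_set r \subset head_qubits N.
Proof.
apply/subsetP => k; rewrite !inE qbitE; apply: contraR; rewrite -leqNgt => hk.
by rewrite bit_mul4 //; have := ltn_ord k; lia.
Qed.

Lemma flip_x_flip_set r (j : 'I_(2 ^ N)) :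
  flip_x (flip_set r) j (idx0 N) = (j == tail00 r)%:R.
Proof.
rewrite flip_xE; apply: (congr1 (fun b : bool => b%:R)).
apply/forallP/eqP => [fixed|-> k]; last first.
  by rewrite inE negbK -val_eqE /= qbit_idx0 eqxx.
apply: qbit_inj => k; have := fixed k; rewrite inE negbK -val_eqE /= qbit_idx0.
by case: (qbit k j) (qbit k (tail00 r)) => [[|[|?]] ?] [[|[|?]] ?].
Qed.

Lemma pair_basis_sub_flip_span : (pair_basis <= flip_span N)%MS.
Proof.
apply/row_subP => r; apply: (sumsmx_sup (flip_set r)); first exact: flip_set_sub.
rewrite genmxE (_ : row r pair_basis = sqrtC 2 *: flip_ghz (flip_set r)) ?scalemx_sub //.
apply/rowP => j; rewrite [LHS]mxE [LHS]mxE [RHS]mxE flip_ghzE ?(ltnW h) //.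
rewrite flip_x_revr !flip_x_flip_set eq_rev_ordL.
by rewrite mulrCA mulfV ?sqrtC2_neq0 // mulr1.
Qed.

End PairBasis.

Theorem mainTheorem6 (N : nat) (hN : (3 <= N)%N) :
  [/\ eigenvalue (I_CHSH N) (2 * sqrtC 2),
      (forall a : algC, eigenvalue (I_CHSH N) a -> a <= 2 * sqrtC 2),
      ghz N != 0 /\ I_CHSH N *m ghz N = (2 * sqrtC 2) *: ghz N,
      \rank (col_eigenspace (I_CHSH N) (2 * sqrtC 2)) = (2 ^ (N - 2))%N &
      (col_eigenspace (I_CHSH N) (2 * sqrtC 2)%R ==
         flip_span N)%MS].
Proof.
have h : (1 < N)%N by apply: ltnW.
have -> : col_eigenspace (I_CHSH N) tsirelson = eigenspace (I_CHSH N) tsirelson.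
  by rewrite /col_eigenspace I_CHSH_sym.
have E_B : (eigenspace (I_CHSH N) tsirelson <= pair_basis h)%MS.
  by apply/row_subP => i; apply/eigenvector_sub_pair_basis/row_sub.
have B_F := pair_basis_sub_flip_span h.
have F_E : (flip_span N <= eigenspace (I_CHSH N) tsirelson)%MS.
  by apply/sumsmx_subP => K hK; rewrite genmxE; exact: flip_ghz_eigen.
have ghz_row := ghz_eigen h.
split.
- apply/eigenvalueP; exists (ghz N)^T; first exact/eigenspaceP.
  by rewrite trmx_eq0 ghz_neq0.
- exact: eigenvalue_le_tsirelson.
- split; first exact: ghz_neq0.
  by apply: trmx_inj; rewrite trmx_mul (I_CHSH_sym h) (eigenspaceP ghz_row) linearZ.
- rewrite -(rank_pair_basis h); apply/eqmx_rank/andP; split => //.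
  exact: submx_trans B_F F_E.
- by rewrite F_E (submx_trans E_B B_F).
Qed.
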